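(* Let $n\ge4$, $0<\alpha_2,\alpha_3<1$, $\alpha_1=1-\alpha_2-\alpha_3$, $\lambda^*=\big(\frac{n-1+\alpha_1}{n},\frac{\alpha_2}{n},\frac{\alpha_3}{n}\big)$. Then $$|l_{(n-2,1,1)}(\lambda^* )|\le\frac{2}{e(\ln n-1)}\binom{n}{n-2}.$$
   Context: For an integer $n\ge1$ and $i=(i_1,i_2,i_3)\in\mathbb{Z}_+^3$ with $i_1+i_2+i_3=n$, $l_i(\lambda)=\prod_{s=1}^{3}\frac{1}{i_s!}\prod_{t=0}^{i_s-1}(n\lambda_s-t)$ for $\lambda=(\lambda_1,\lambda_2,\lambda_3)$ (Lagrange fundamental polynomials for the equally spaced nodes $i/n$ of a triangle in barycentric coordinates). *)

From Stdlib Require Import Reals Arith.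
Open Scope R_scope.

Fixpoint fall (x : R) (k : nat) : R :=
  match k with
  | O => 1
  | S k' => fall x k' * (x - INR k')
  end.

(* Lagrange fundamental polynomial l_i(lambda) for the equally spaced nodes
   i/n of a triangle, i = (i1,i2,i3), lambda = (l1,l2,l3) barycentric. *)
Definition lagr (n : nat) (i : nat * nat * nat) (lam : R * R * R) : R :=
  let '(i1, i2, i3) := i in
  let '(l1, l2, l3) := lam in
  (fall (INR n * l1) i1 / INR (Factorial.fact i1)) *
  (fall (INR n * l2) i2 / INR (Factorial.fact i2)) *
  (fall (INR n * l3) i3 / INR (Factorial.fact i3)).

From Stdlib Require Import Reals Lra Lia.
Open Scope R_scope.

(* Write n = m + 2 and b = a2 + a3, so that n * lambda*_1 = n - b and
     l_(m,1,1)(lambda* ) = P_b(m) * a2 * a3,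
     P_b(m) = fall (m + 2 - b) m / m! = prod_(k=1..m) (k + 2 - b) / k.
   Each factor satisfies (k + 2 - b)/k = (k + 2)/k * (1 - b/(k + 2)) and
     1 - b/j <= exp (- b / j) <= exp (- b * (ln (j + 1) - ln j)),
   so the product telescopes to
     P_b(m) <= C(m + 2, 2) * exp (- b * L),   L = ln (m + 3) - ln 3.
   Since a2 * a3 <= b^2 / 4 <= b / 2 and x * exp (- x) <= 1 / e,
     b * exp (- b * L) <= 1 / (e * L) <= 4 / (e * (ln n - 1)),
   the last step being the elementary growth estimate ln n - 1 <= 4 L. *)

Lemma ln_le_sub_one (z : R) : 0 < z -> ln z <= z - 1.
Proof.
  intros Hz. apply Rnot_lt_le. intros Hlt.
  apply exp_increasing in Hlt. rewrite exp_ln in Hlt by exact Hz.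
  pose proof (exp_ineq1_le (z - 1)). lra.
Qed.

Lemma ln_succ_sub_le (k : R) : 0 < k -> ln (k + 1) - ln k <= / k.
Proof.
  intros Hk.
  assert (Hq : k + 1 = k * ((k + 1) / k)) by (field; lra).
  rewrite Hq at 1.
  rewrite ln_mult by (try apply Rdiv_lt_0_compat; lra).
  replace (/ k) with ((k + 1) / k - 1) by (field; lra).
  assert (ln ((k + 1) / k) <= (k + 1) / k - 1)
    by (apply ln_le_sub_one, Rdiv_lt_0_compat; lra).
  lra.
Qed.

Lemma one_sub_le_exp_ln (b k : R) : 0 <= b -> 0 < k ->
  1 - b / k <= exp (- b * (ln (k + 1) - ln k)).
Proof.
  intros Hb Hk.
  assert (Hd : b * (ln (k + 1) - ln k) <= b / k)
    by (apply Rmult_le_compat_l; [lra | apply ln_succ_sub_le; lra]).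
  pose proof (exp_ineq1_le (- b * (ln (k + 1) - ln k))). lra.
Qed.

(* The ratio (k - b)/(k - 2) = P_b(m + 1)/P_b(m), with k = m + 3, is
   nonnegative and at most k/(k - 2) times the exponential factor. *)
Lemma ratio_bound (b k : R) : 0 <= b <= 3 -> 3 <= k ->
  0 <= (k - b) / (k - 2) <= k / (k - 2) * exp (- b * (ln (k + 1) - ln k)).
Proof.
  intros Hb Hk. split.
  - apply Rmult_le_pos; [lra | left; apply Rinv_0_lt_compat; lra].
  - replace ((k - b) / (k - 2)) with (k / (k - 2) * (1 - b / k)) by (field; lra).
    apply Rmult_le_compat_l.
    + left. apply Rdiv_lt_0_compat; lra.
    + apply one_sub_le_exp_ln; lra.
Qed.

Lemma fall_succ_shift (x : R) (k : nat) : fall (x + 1) (S k) = (x + 1) * fall x k.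
Proof.
  induction k as [|k IH].
  - simpl. ring.
  - change (fall (x + 1) (S (S k))) with (fall (x + 1) (S k) * (x + 1 - INR (S k))).
    change (fall x (S k)) with (fall x k * (x - INR k)).
    rewrite IH, S_INR. ring.
Qed.

Lemma normalized_fall_succ (b : R) (m : nat) :
  fall (INR (S m) + 2 - b) (S m) / INR (Factorial.fact (S m)) =
  (INR m + 3 - b) / (INR m + 1) * (fall (INR m + 2 - b) m / INR (Factorial.fact m)).
Proof.
  replace (INR (S m) + 2 - b) with ((INR m + 2 - b) + 1) by (rewrite S_INR; ring).
  rewrite fall_succ_shift.
  change (Factorial.fact (S m)) with (S m * Factorial.fact m)%nat.
  rewrite mult_INR, S_INR.
  assert (0 < INR (Factorial.fact m)) by apply lt_0_INR, Factorial.lt_O_fact.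
  pose proof (pos_INR m).
  field. lra.
Qed.

Lemma normalized_fall_bound (b : R) (m : nat) : 0 <= b <= 3 ->
  0 <= fall (INR m + 2 - b) m / INR (Factorial.fact m) <=
  (INR m + 2) * (INR m + 1) / 2 * exp (- b * (ln (INR m + 3) - ln 3)).
Proof.
  intros Hb. induction m as [|m [IH0 IH1]].
  - simpl. replace (0 + 3) with 3 by ring.
    rewrite Rminus_diag, Rmult_0_r, exp_0. lra.
  - rewrite normalized_fall_succ.
    pose proof (pos_INR m).
    destruct (ratio_bound b (INR m + 3) Hb ltac:(lra)) as [Hr0 Hr1].
    replace (INR m + 3 - 2) with (INR m + 1) in Hr0, Hr1 by ring.
    set (E1 := exp (- b * (ln (INR m + 3) - ln 3))) in *.
    set (E2 := exp (- b * (ln (INR m + 3 + 1) - ln (INR m + 3)))) in *.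
    assert (Hsplit : exp (- b * (ln (INR (S m) + 3) - ln 3)) = E1 * E2).
    { unfold E1, E2. rewrite S_INR, <- exp_plus. f_equal.
      replace (INR m + 1 + 3) with (INR m + 3 + 1) by ring. ring. }
    rewrite Hsplit. split.
    + apply Rmult_le_pos; lra.
    + assert (0 < E1) by apply exp_pos.
      apply Rle_trans with
        ((INR m + 3) / (INR m + 1) * E2 * ((INR m + 2) * (INR m + 1) / 2 * E1)).
      * apply Rmult_le_compat; lra.
      * right. rewrite S_INR. field. lra.
Qed.

Lemma mul_exp_neg_le (x : R) : x * exp (- x) <= / exp 1.
Proof.
  assert (He : 0 < exp 1) by apply exp_pos.
  assert (Hx : 0 < exp x) by apply exp_pos.
  assert (Htan : exp 1 * x <= exp x).
  { replace (exp x) with (exp 1 * exp (x - 1)) by (rewrite <- exp_plus; f_equal; ring).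
    pose proof (exp_ineq1_le (x - 1)). nra. }
  rewrite exp_Ropp.
  apply Rmult_le_reg_l with (exp 1 * exp x); [nra |].
  replace (exp 1 * exp x * (x * / exp x)) with (exp 1 * x) by (field; lra).
  replace (exp 1 * exp x * / exp 1) with (exp x) by (field; lra).
  exact Htan.
Qed.

Lemma decay_bound (b L : R) : 0 < L -> b * exp (- b * L) <= / (exp 1 * L).
Proof.
  intros HL.
  assert (He : 0 < exp 1) by apply exp_pos.
  pose proof (mul_exp_neg_le (b * L)) as H.
  replace (- (b * L)) with (- b * L) in H by ring.
  apply Rmult_le_reg_r with L; [exact HL |].
  replace (/ (exp 1 * L) * L) with (/ exp 1) by (field; lra).
  lra.
Qed.

(* Growth of the logarithm: ln x - 1 <= 4 (ln (x + 1) - ln 3) for x >= 4,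
   because 3 ln (x + 1) >= ln 125 > ln 81 = 4 ln 3. *)
Lemma ln_growth (x : R) : 4 <= x -> ln x - 1 <= 4 * (ln (x + 1) - ln 3).
Proof.
  intros Hx.
  assert (Hmono : ln x < ln (x + 1)) by (apply ln_increasing; lra).
  assert (Hcube : 4 * ln 3 < 3 * ln (x + 1)).
  { replace 4 with (INR 4) by (simpl; ring).
    replace 3 with (INR 3) at 2 by (simpl; ring).
    rewrite <- !ln_pow by lra.
    apply ln_increasing; simpl; nra. }
  lra.
Qed.

(* ln x > 1 for x >= 4, since e <= 3. *)
Lemma one_lt_ln (x : R) : 4 <= x -> 1 < ln x.
Proof.
  intros Hx. rewrite <- (ln_exp 1) at 1.
  pose proof exp_le_3.
  apply ln_increasing; [apply exp_pos | lra].
Qed.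

Lemma decay_log_bound (b x : R) : 4 <= x ->
  b * exp (- b * (ln (x + 1) - ln 3)) <= 4 / (exp 1 * (ln x - 1)).
Proof.
  intros Hx.
  assert (He : 0 < exp 1) by apply exp_pos.
  assert (Hgrowth := ln_growth x Hx).
  assert (Hln1 := one_lt_ln x Hx).
  set (L := ln (x + 1) - ln 3) in *.
  apply Rle_trans with (/ (exp 1 * L)); [apply decay_bound; lra |].
  apply Rle_trans with (/ (exp 1 * ((ln x - 1) / 4))).
  - apply Rinv_le_contravar; nra.
  - right. field. lra.
Qed.

Lemma binomial_choose_two (m : nat) :
  Binomial.C (S (S m)) m = (INR m + 2) * (INR m + 1) / 2.
Proof.
  unfold Binomial.C. replace (S (S m) - m)%nat with 2%nat by lia.
  change (Factorial.fact (S (S m))) with (S (S m) * (S m * Factorial.fact m))%nat.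
  rewrite !mult_INR, !S_INR.
  assert (0 < INR (Factorial.fact m)) by apply lt_0_INR, Factorial.lt_O_fact.
  simpl (INR (Factorial.fact 2)). field. lra.
Qed.

Lemma lagr_lambda_star (n : nat) (a2 a3 : R) : (0 < n)%nat ->
  lagr n ((n - 2)%nat, 1%nat, 1%nat)
    ((INR n - 1 + (1 - a2 - a3)) / INR n, a2 / INR n, a3 / INR n) =
  fall (INR n - (a2 + a3)) (n - 2) / INR (Factorial.fact (n - 2)) * (a2 * a3).
Proof.
  intros Hn.
  assert (HN : 0 < INR n) by (apply lt_0_INR; exact Hn).
  unfold lagr.
  replace (INR n * ((INR n - 1 + (1 - a2 - a3)) / INR n)) with (INR n - (a2 + a3))
    by (field; lra).
  replace (INR n * (a2 / INR n)) with a2 by (field; lra).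
  replace (INR n * (a3 / INR n)) with a3 by (field; lra).
  simpl (fall _ 1). simpl (INR (Factorial.fact 1)). field.
  apply not_0_INR, Nat.neq_0_lt_0, Factorial.lt_O_fact.
Qed.

Theorem lemma24 (n : nat) (a1 a2 a3 : R) :
  (4 <= n)%nat ->
  0 < a2 < 1 -> 0 < a3 < 1 ->
  a1 = 1 - a2 - a3 ->
  Rabs (lagr n ((n - 2)%nat, 1%nat, 1%nat)
          ((INR n - 1 + a1) / INR n, a2 / INR n, a3 / INR n))
  <= 2 / (exp 1 * (ln (INR n) - 1)) * Binomial.C n (n - 2).
Proof.
  intros Hn H2 H3 ->.
  rewrite lagr_lambda_star by lia.
  destruct n as [|[|m]]; try lia.
  replace (S (S m) - 2)%nat with m by lia.
  rewrite binomial_choose_two.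
  assert (HN : INR (S (S m)) = INR m + 2) by (rewrite !S_INR; ring).
  assert (Hn4 : 4 <= INR m + 2)
    by (rewrite <- HN; replace 4 with (INR 4) by (simpl; ring); apply le_INR; exact Hn).
  rewrite HN.
  set (b := a2 + a3).
  destruct (normalized_fall_bound b m ltac:(unfold b; lra)) as [P0 P1].
  assert (Hdecay := decay_log_bound b (INR m + 2) Hn4).
  replace (INR m + 2 + 1) with (INR m + 3) in Hdecay by ring.
  set (K := (INR m + 2) * (INR m + 1) / 2) in *.
  set (E := exp (- b * (ln (INR m + 3) - ln 3))) in *.
  assert (HK : 0 < K) by (unfold K; nra).
  assert (Hprod : a2 * a3 <= b / 2) by (unfold b; nra).
  rewrite Rabs_right by (apply Rle_ge, Rmult_le_pos; nra).
  apply Rle_trans with (K * (b * E) / 2).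
  { replace (K * (b * E) / 2) with (K * E * (b / 2)) by field.
    apply Rmult_le_compat; nra. }
  apply Rle_trans with (K * (4 / (exp 1 * (ln (INR m + 2) - 1))) / 2).
  { apply Rmult_le_compat_r; [lra |]. apply Rmult_le_compat_l; lra. }
  assert (Hln1 := one_lt_ln (INR m + 2) Hn4).
  right. field. split; [lra | apply exp_neq_0].
Qed.
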